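(* For any categorial sequential allocation mechanism $f_\mathcal O$, any assignment of each agent as optimistic or pessimistic, any agent $j$, and any profile: (1) if $j$ is optimistic, then the rank (in $R_j$) of the bundle allocated to $j$ is at most $n^p+1-\prod_{l=K_j}^{p}k_{j,\mathcal O_j(l)}$; (2) if $j$ is pessimistic, then the rank of the bundle allocated to $j$ is at most $n^p-\sum_{l=1}^{p}(k_{j,\mathcal O_j(l)}-1)$.
   Context: Basic categorized domain: $n$ agents, $p$ categories $D_i=\{1,\ldots,n\}$ of indivisible items, bundles $\mathfrak D=D_1\times\cdots\times D_p$; each agent $j$ has a linear order $R_j$ over $\mathfrak D$ (a profile is $(R_1,\ldots,R_n)$). $\mathrm{Rank}(R,\vec d)\in\{1,\ldots,n^p\}$ is the position of $\vec d$ in $R$ (top position has rank $1$). Categorial sequential allocation mechanism (CSAM) $f_\mathcal O$: given a linear order $\mathcal O$ over $\{1,\ldots,n\}\times\{1,\ldots,p\}$, in rounds $t=1,\ldots,np$, if the $t$-th element of $\mathcal O$ is $(j,i)$ then agent $j$ chooses an item $d_{j,i}$ from $D_{i,t}$, the set of items of $D_i$ not yet chosen at the start of round $t$; the choice is announced to all. Agent $j$ finally receives $(d_{j,1},\ldots,d_{j,p})$. Each agent is fixed in advance to be optimistic or pessimistic. When agent $j$ chooses from $D_i$ in round $t$, a bundle is available to her if for each category $l$ from which she has already chosen its $l$-th component equals her chosen item $d_{j,l}$, and for each other category $l$ its $l$-th component lies in $D_{l,t}$. An optimistic agent chooses the $i$-th component of her top-ranked available bundle. A pessimistic agent chooses the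 $d\in D_{i,t}$ for which her lowest-ranked available bundle with $i$-th component $d$ is highest in $R_j$. Notation: $\mathcal O_j$ is the order over categories in which agent $j$ chooses in $\mathcal O$ ($\mathcal O_j(l)$ is the $l$-th category she chooses from). $k_{j,i}$ is the number of items in $D_i$ still available right before $j$ chooses from $D_i$, i.e. $n$ minus the number of agents who choose from $D_i$ before $j$ in $\mathcal O$. $K_j$ is the smallest index $K\in\{1,\ldots,p\}$ such that for every $l$ with $K<l\leq p$, no agent chooses an item from category $\mathcal O_j(l)$ in any round strictly between the round of $(j,\mathcal O_j(K))$ and the round of $(j,\mathcal O_j(l))$. *)

From mathcomp Require Import all_boot.
Set Implicit Arguments. Unset Strict Implicit. Unset Printing Implicit Defensive.

Section CSAM.
Variables (n p : nat).

(* agents = 'I_n, categories = 'I_p, items of each category D_i = 'I_n *)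
Definition bundle := {ffun 'I_p -> 'I_n}.

(* A linear order R over bundles is a list of all bundles, best first. *)
Definition is_linear_order (R : seq bundle) : Prop := perm_eq R (enum {: bundle}).
Definition Rank (R : seq bundle) (d : bundle) : nat := (index d R).+1.

(* A CSAM order O over agents x categories: list of all pairs, round t = t-th element *)
Definition is_csam_order (O : seq ('I_n * 'I_p)) : Prop :=
  perm_eq O (enum {: 'I_n * 'I_p}).

(* history of announced choices (agent, category, item) *)
Definition history := seq ('I_n * 'I_p * 'I_n).

Definition chosen_from (h : history) (j : 'I_n) (l : 'I_p) : option 'I_n :=
  ohead [seq x.2 | x <- h & (x.1.1 == j) && (x.1.2 == l)].

Definition taken (h : history) (l : 'I_p) (d : 'I_n) : bool :=
  has (fun x => (x.1.2 == l) && (x.2 == d)) h.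

Definition available (h : history) (j : 'I_n) (b : bundle) : bool :=
  [forall l, if chosen_from h j l is Some d then b l == d else ~~ taken h l (b l)].

(* optimistic: i-th component of top-ranked available bundle
   (default value j is never used in a valid run) *)
Definition opt_choice (R : seq bundle) (h : history) (j : 'I_n) (i : 'I_p) : 'I_n :=
  odflt j (omap (fun b : bundle => b i) (ohead [seq b <- R | available h j b])).

Definition worst_rank (R : seq bundle) (h : history) (j : 'I_n) (i : 'I_p) (d : 'I_n) : nat :=
  \max_(b : bundle | available h j b && (b i == d)) Rank R b.

(* pessimistic: choose d in D_{i,t} whose worst available bundle is ranked highest *)
Definition pess_choice (R : seq bundle) (h : history) (j : 'I_n) (i : 'I_p) : 'I_n :=
  odflt j [pick d | ~~ taken h i d &&
                    [forall d', ~~ taken h i d' ==> (worst_rank R h j i d <= worst_rank R h j i d')]].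

Definition choice (optim : 'I_n -> bool) (R : 'I_n -> seq bundle)
    (h : history) (j : 'I_n) (i : 'I_p) : 'I_n :=
  if optim j then opt_choice (R j) h j i else pess_choice (R j) h j i.

Definition run (O : seq ('I_n * 'I_p)) optim R : history :=
  foldl (fun h (ji : 'I_n * 'I_p) => rcons h (ji.1, ji.2, choice optim R h ji.1 ji.2)) [::] O.

Definition csam (O : seq ('I_n * 'I_p)) optim R (j : 'I_n) : bundle :=
  [ffun i => odflt j (chosen_from (run O optim R) j i)].

(* O_j: list of categories in the order j chooses them (O_j(l) = nth (l-1)) *)
Definition Oj (O : seq ('I_n * 'I_p)) (j : 'I_n) : seq 'I_p :=
  [seq x.2 | x <- O & x.1 == j].

Definition kji (O : seq ('I_n * 'I_p)) (j : 'I_n) (i : 'I_p) : nat :=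
  n - count (fun x : 'I_n * 'I_p => x.2 == i) (take (index (j, i) O) O).

Definition nobody_between (O : seq ('I_n * 'I_p)) (j : 'I_n) (a c : 'I_p) : bool :=
  all (fun x : 'I_n * 'I_p => x.2 != c) (drop (index (j, a) O).+1 (take (index (j, c) O) O)).

(* condition for K (0-indexed K0 = K - 1) *)
Definition Kcond (O : seq ('I_n * 'I_p)) (j : 'I_n) (K0 : nat) : bool :=
  [forall a : 'I_p, forall c : 'I_p,
     ((index a (Oj O j) == K0) && (K0 < index c (Oj O j))) ==> nobody_between O j a c].

(* K_j - 1 : smallest 0-indexed K0 in {0..p-1} satisfying the condition *)
Definition Kj0 (O : seq ('I_n * 'I_p)) (j : 'I_n) : nat := find (Kcond O j) (iota 0 p).

End CSAM.

From mathcomp Require Import all_boot zify.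
Set Implicit Arguments. Unset Strict Implicit. Unset Printing Implicit Defensive.

(* Pessimistic agent: let M_t be the worst rank of a bundle still available to her
   at round t. Other agents' picks only shrink her available set. When she picks from
   category c, the (at least k_{j,c}) untaken items of c have pairwise distinct worst
   available ranks, all at most M_t; she takes the one minimising it, and that value
   bounds M_{t+1}. So M drops by at least k_{j,c} - 1 at each of her turns, and her
   final bundle has rank at most the final M.
   Optimistic agent: let a = O_j(K_j). When she picks from a, at least
   prod_{l >= K_j} k_{j,O_j(l)} bundles are available to her, so her top available
   bundle b has rank at most n^p + 1 minus that product. By the choice of K_j nobody
   picks from her remaining categories before she does, so b stays available and she
   ends up with b. *)

Lemma ohead_filter_Some (T : eqType) (P : pred T) (s : seq T) (x : T) :
  ohead [seq y <- s | P y] = Some x <->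
  [/\ x \in s, P x & all (predC P) (take (index x s) s)].
Proof.
elim: s x => [|y s IH] x /=; first by split=> // -[].
case: eqP => [<-|neq_yx]; case: ifP => Py /=.
- by rewrite inE eqxx; split.
- by rewrite IH Py; split=> -[].
- by split=> [[/neq_yx]|[_ _ /andP[/negP]]].
- rewrite IH inE Py /=.
  split=> -[xs Px notP]; split=> //; first by rewrite xs orbT.
  by case/predU1P: xs => [/esym|].
Qed.

Lemma ohead_filter_sub (T : eqType) (P P' : pred T) (s : seq T) (x : T) :
  {subset P' <= P} -> P' x ->
  ohead [seq y <- s | P y] = Some x -> ohead [seq y <- s | P' y] = Some x.
Proof.
move=> sub P'x /ohead_filter_Some[sx _ notP]; apply/ohead_filter_Some; split=> //.
by apply: sub_all notP => y /=; apply: contra; apply: sub.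
Qed.

Lemma ohead_filter_exists (T : eqType) (P : pred T) (s : seq T) (x : T) :
  x \in s -> P x -> exists y, ohead [seq z <- s | P z] = Some y.
Proof.
move=> sx Px; case head: (ohead _) => [y|]; first by exists y.
have : x \in [seq y <- s | P y] by rewrite mem_filter Px sx.
by case: [seq _ <- _ | _] head.
Qed.

Lemma index_ohead_filter_le (T : finType) (P : pred T) (s : seq T) (x : T) :
  uniq s -> ohead [seq y <- s | P y] = Some x -> index x s <= #|predC P|.
Proof.
move=> us /ohead_filter_Some[sx _ /allP notP].
have size_take_index : size (take (index x s) s) = index x s.
  by rewrite size_takel // ltnW // index_mem.
rewrite -{1}size_take_index -(card_uniqP (take_uniq _ us)); apply: subset_leq_card.
by apply/subsetP => y /notP.
Qed.

Lemma size_drop_cons (T : Type) (s s' : seq T) t x : drop t s = x :: s' -> t < size s.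
Proof. by move=> dropE; rewrite -subn_gt0 -size_drop dropE. Qed.

Lemma nth_drop_cons (T : Type) (s s' : seq T) t x : drop t s = x :: s' -> nth x s t = x.
Proof. by move=> dropE; rewrite -[t]addn0 -nth_drop dropE. Qed.

Lemma take_drop_cons (T : Type) (s s' : seq T) t x :
  drop t s = x :: s' -> take t.+1 s = rcons (take t s) x.
Proof.
by move=> dropE; rewrite (take_nth x (size_drop_cons dropE)) (nth_drop_cons dropE).
Qed.

Lemma drop_cons (T : Type) (s : seq T) t : t < size s -> exists x s', drop t s = x :: s'.
Proof.
move=> lt_t; case dropE: (drop t s) => [|x s']; last by exists x, s'.
by move: lt_t; rewrite -subn_gt0 -size_drop dropE.
Qed.

Lemma count_take_leq (T : Type) (P : pred T) (s : seq T) t t' :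
  t <= t' -> count P (take t s) <= count P (take t' s).
Proof.
move=> le_tt'; rewrite -(take_takel s le_tt') -{2}(cat_take_drop t (take t' s)).
by rewrite count_cat leq_addr.
Qed.

Lemma leq_add_card_injective (T : finType) (U : {pred T}) (f : T -> nat) x0 m :
  x0 \in U -> {in U &, injective f} -> {in U, forall x, f x0 <= f x <= m} ->
  f x0 + #|U|.-1 <= m.
Proof.
move=> Ux0 injf bounds.
have uniq_fU : uniq [seq f x | x <- enum U].
  by rewrite map_inj_in_uniq ?enum_uniq // => x y; rewrite !mem_enum; apply: injf.
have sub_fU : {subset [seq f x | x <- enum U] <= iota (f x0) (m.+1 - f x0)}.
  move=> y /mapP[x]; rewrite mem_enum => /bounds /andP[lo hi] ->.
  by rewrite mem_iota lo /=; lia.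
have := uniq_leq_size uniq_fU sub_fU; rewrite size_map size_iota -cardE.
have := bounds x0 Ux0; have : 0 < #|U| by apply/card_gt0P; exists x0.
move: #|U| => u; lia.
Qed.

Lemma leq_index_drop (T : eqType) (s : seq T) i x :
  uniq s -> x \in drop i s -> i <= index x s.
Proof.
move=> uniq_s x_drop; rewrite leqNgt -in_take ?(mem_drop x_drop) //.
have := uniq_s; rewrite -{1}(cat_take_drop i s) cat_uniq.
by case/and3P=> _ /hasPn/(_ x x_drop).
Qed.

Section History.
Variables n p : nat.
Implicit Types (h : history n p) (j : 'I_n) (c l : 'I_p) (d : 'I_n) (b : bundle n p)
  (R : seq (bundle n p)).

Lemma chosen_from_rcons h x j l :
  chosen_from (rcons h x) j l =
  if chosen_from h j l is Some d then Some d
  else if (x.1.1 == j) && (x.1.2 == l) then Some x.2 else None.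
Proof.
rewrite /chosen_from filter_rcons.
case: ifP => _; last by case: (ohead _).
by rewrite map_rcons; case: [seq _ | _ <- _ & _].
Qed.

Lemma chosen_from_None h j l : (chosen_from h j l == None) = ((j, l) \notin map fst h).
Proof.
rewrite /chosen_from -has_pred1 has_map has_filter negbK.
by case: [seq _ <- h | _] => [|[[? ?] ?] ?].
Qed.

Lemma taken_rcons h x l d :
  taken (rcons h x) l d = taken h l d || (x.1.2 == l) && (x.2 == d).
Proof. by rewrite /taken has_rcons orbC. Qed.

Lemma available_rcons_other h x j b :
  x.1.1 != j -> available (rcons h x) j b -> available h j b.
Proof.
move=> x_j /forallP avail; apply/forallP => l; have := avail l.
rewrite chosen_from_rcons (negbTE x_j) /=.
by case: (chosen_from h j l) => //; rewrite taken_rcons negb_or => /andP[].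
Qed.

Lemma available_rcons_other_keep h x j b :
  x.1.1 != j -> (forall l, chosen_from h j l = None -> x.1.2 != l) ->
  available h j b -> available (rcons h x) j b.
Proof.
move=> x_j x_cats /forallP avail; apply/forallP => l; have := avail l.
rewrite chosen_from_rcons (negbTE x_j) /=.
case chosen_l: (chosen_from h j l) => [d|] // b_free.
by rewrite taken_rcons (negbTE b_free) (negbTE (x_cats l chosen_l)).
Qed.

Lemma available_rcons_own h j c d b :
  chosen_from h j c = None -> ~~ taken h c d ->
  available (rcons h (j, c, d)) j b = available h j b && (b c == d).
Proof.
move=> c_free d_free; apply/idP/idP => [/forallP avail | /andP[/forallP avail /eqP bc]].
  apply/andP; split; last by have := avail c; rewrite chosen_from_rcons c_free /= !eqxx.
  apply/forallP => l; have := avail l; rewrite chosen_from_rcons /= eqxx /=.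
  case: (chosen_from h j l) => //; case: eqP => [<- /eqP -> // | _].
  by rewrite taken_rcons negb_or => /andP[].
apply/forallP => l; have := avail l; rewrite chosen_from_rcons /= eqxx /=.
case: (chosen_from h j l) => //; case: eqP => [<- _ | /eqP/negbTE ne_cl].
  by rewrite bc.
by rewrite taken_rcons negb_or ne_cl => ->.
Qed.

Lemma card_bundle : #|{: bundle n p}| = n ^ p.
Proof. by rewrite card_ffun !card_ord. Qed.

Lemma mem_linear_order R b : is_linear_order R -> b \in R.
Proof. by move=> ordR; rewrite (perm_mem ordR) mem_enum. Qed.

Lemma Rank_le R b : is_linear_order R -> Rank R b <= n ^ p.
Proof.
move=> ordR; rewrite /Rank -card_bundle cardT -(perm_size ordR) index_mem.
exact: mem_linear_order.
Qed.

Lemma Rank_inj R : is_linear_order R -> injective (Rank R).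
Proof.
move=> ordR b b' [] eq_index.
by rewrite -(nth_index b (mem_linear_order b ordR)) eq_index nth_index ?mem_linear_order.
Qed.

Definition untaken h l : pred 'I_n := [pred d | ~~ taken h l d].

Lemma card_untaken_ge h l : n - count (fun x => x.1.2 == l) h <= #|untaken h l|.
Proof.
have card_taken : #|[predC untaken h l]| <= count (fun x => x.1.2 == l) h.
  rewrite -size_filter -(size_map snd); apply: leq_trans (card_size _).
  apply: subset_leq_card; apply/subsetP => d; rewrite !inE negbK.
  case/hasP=> x hx /andP[xl /eqP <-].
  by apply: map_f; rewrite mem_filter xl.
have := cardC (untaken h l); rewrite card_ord.
by move: card_taken; set k := #|[predC _]|; set u := #|untaken h l|; lia.
Qed.

Definition options h j l : pred 'I_n :=
  if chosen_from h j l is Some d then pred1 d else untaken h l.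

Lemma availableP h j b : reflect (forall l, b l \in options h j l) (available h j b).
Proof.
apply: (iffP forallP) => avail l; have := avail l;
by rewrite /options; case: (chosen_from h j l).
Qed.

Lemma card_available h j : #|available h j| = \prod_l #|options h j l|.
Proof.
have -> : #|available h j| = #|family (options h j)|.
  by apply: eq_card => b; rewrite !inE; apply/availableP/familyP.
by rewrite card_family /image_mem /= /index_enum -enumT foldrE big_map.
Qed.

Definition max_rank R h j := \max_(b | available h j b) Rank R b.

Section PessimisticChoice.
Variables (R : seq (bundle n p)) (h : history n p) (j : 'I_n) (c : 'I_p).
Hypothesis ordR : is_linear_order R.
Hypothesis options_nonempty : forall l, exists e, e \in options h j l.
Hypothesis c_free : chosen_from h j c = None.

Lemma exists_available_with d :
  d \in untaken h c -> exists2 b, available h j b & b c = d.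
Proof.
move=> d_free.
exists [ffun l => if l == c then d else xchoose (options_nonempty l)]; last first.
  by rewrite ffunE eqxx.
apply/availableP => l; rewrite ffunE; case: eqP => [->|_]; last exact: xchooseP.
by rewrite /options c_free.
Qed.

Lemma worst_rank_witness d :
  d \in untaken h c ->
  exists b, [/\ available h j b, b c = d & worst_rank R h j c d = Rank R b].
Proof.
move=> /exists_available_with[b0 avail0 b0c].
have [|b /andP[avail /eqP bc] worst_b] :=
  eq_bigmax_cond (Rank R) (_ : 0 < #|[pred b | available h j b && (b c == d)]|).
  by apply/card_gt0P; exists b0; rewrite inE avail0 b0c /=.
by exists b; split=> //; apply: worst_b.
Qed.

Lemma worst_rank_le_max d : d \in untaken h c -> worst_rank R h j c d <= max_rank R h j.
Proof. by case/worst_rank_witness=> b [avail _ ->]; apply: leq_bigmax_cond. Qed.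

Lemma worst_rank_inj : {in untaken h c &, injective (worst_rank R h j c)}.
Proof.
move=> d d' /worst_rank_witness[b [_ <- ->]] /worst_rank_witness[b' [_ <- ->]].
by move/(Rank_inj ordR) ->.
Qed.

Lemma pess_choice_min :
  pess_choice R h j c \in untaken h c /\
  {in untaken h c, forall d, worst_rank R h j c (pess_choice R h j c) <= worst_rank R h j c d}.
Proof.
rewrite /pess_choice; case: pickP => [d /andP[d_free /forallP d_min] | no_min].
  by split=> // d' /(implyP (d_min d')).
have [d0] := options_nonempty c; rewrite /options c_free => d0_free.
have [d d_free d_min] := arg_minnP (worst_rank R h j c) d0_free.
have /negP[] := negbT (no_min d); rewrite (d_free : ~~ taken h c d) /=.
by apply/forallP => d'; apply/implyP; apply: d_min.
Qed.

Lemma worst_rank_pess_choice :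
  worst_rank R h j c (pess_choice R h j c) + #|untaken h c|.-1 <= max_rank R h j.
Proof.
have [ds_free ds_min] := pess_choice_min.
apply: leq_add_card_injective ds_free worst_rank_inj _ => d d_free.
by rewrite ds_min // worst_rank_le_max.
Qed.

End PessimisticChoice.

End History.

Lemma csam_order_uniq n p (O : seq ('I_n * 'I_p)) : is_csam_order O -> uniq O.
Proof. by move=> ordO; rewrite (perm_uniq ordO) enum_uniq. Qed.

Lemma mem_csam_order n p (O : seq ('I_n * 'I_p)) x : is_csam_order O -> x \in O.
Proof. by move=> ordO; rewrite (perm_mem ordO) mem_enum. Qed.

Section Run.
Variables (n p : nat) (O : seq ('I_n * 'I_p)) (optim : 'I_n -> bool).
Variable R : 'I_n -> seq (bundle n p).
Hypothesis ordO : is_csam_order O.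

Definition hist t := run (take t O) optim R.

Lemma hist_fst t : map fst (hist t) = take t O.
Proof.
rewrite /hist /run; move: (take t O) => s.
suff foldl_fst h :
    map fst (foldl (fun h ji => rcons h (ji.1, ji.2, choice optim R h ji.1 ji.2)) h s) =
    map fst h ++ s by rewrite foldl_fst.
elim: s h => [|x s IH] h /=; first by rewrite cats0.
by rewrite IH map_rcons cat_rcons; case: x.
Qed.

Lemma hist_succ t x s : drop t O = x :: s ->
  hist t.+1 = rcons (hist t) (x.1, x.2, choice optim R (hist t) x.1 x.2).
Proof. by move=> dropE; rewrite /hist /run (take_drop_cons dropE) foldl_rcons. Qed.

Lemma hist_end t : size O <= t -> hist t = hist (size O).
Proof. by move=> le_Ot; rewrite /hist take_oversize ?take_size. Qed.

Lemma count_category (c : 'I_p) : count (fun x : 'I_n * 'I_p => x.2 == c) O = n.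
Proof.
rewrite -size_filter -(size_map fst).
have uniq_agents : uniq [seq x.1 | x <- O & x.2 == c].
  rewrite map_inj_in_uniq ?filter_uniq ?csam_order_uniq // => -[i1 c1] [i2 c2].
  by rewrite !mem_filter /= => /andP[/eqP -> _] /andP[/eqP -> _] ->.
rewrite -(card_uniqP uniq_agents) -[RHS]card_ord; apply: eq_card => i.
by apply/mapP; exists (i, c); rewrite // mem_filter eqxx mem_csam_order.
Qed.

Variable j : 'I_n.
Local Notation oj := (Oj O j).

Definition round (c : 'I_p) := index (j, c) O.

Lemma round_lt_size c : round c < size O.
Proof. by rewrite /round index_mem mem_csam_order. Qed.

Lemma drop_round c : drop (round c) O = (j, c) :: drop (round c).+1 O.
Proof. by rewrite /round drop_index // mem_csam_order. Qed.

Lemma round_eq t x s c : drop t O = x :: s -> (round c == t) = (x == (j, c)).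
Proof.
move=> dropE; apply/eqP/eqP => [round_c|x_jc].
  by move: dropE; rewrite -round_c drop_round => -[].
rewrite /round -x_jc -{1}(nth_drop_cons dropE).
by rewrite index_uniq ?csam_order_uniq ?(size_drop_cons dropE).
Qed.

Lemma chosen_from_hist_None t c : (chosen_from (hist t) j c == None) = (t <= round c).
Proof.
by rewrite chosen_from_None hist_fst (in_take _ (mem_csam_order _ ordO)) -leqNgt.
Qed.

Lemma kji_gt0 c : 0 < kji O j c.
Proof.
rewrite /kji subn_gt0 -/(round c); move: (count_category c).
by rewrite -{1}(cat_take_drop (round c) O) count_cat drop_round /= eqxx; lia.
Qed.

Lemma kji_le_card_untaken t c : t <= round c -> kji O j c <= #|untaken (hist t) c|.
Proof.
move=> le_t; apply: leq_trans (card_untaken_ge _ _).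
rewrite -(count_map fst (fun x => x.2 == c)) hist_fst.
by rewrite /kji leq_sub2l // count_take_leq.
Qed.

Lemma options_hist_nonempty t l : exists e, e \in options (hist t) j l.
Proof.
rewrite /options; case chosen_l: (chosen_from _ j l) => [d|]; first by exists d; rewrite inE.
move/eqP: chosen_l; rewrite chosen_from_hist_None => /kji_le_card_untaken.
by move/(leq_trans (kji_gt0 l))/card_gt0P.
Qed.

Lemma Oj_uniq : uniq oj.
Proof.
rewrite map_inj_in_uniq ?filter_uniq ?csam_order_uniq // => -[i1 c1] [i2 c2].
by rewrite !mem_filter /= => /andP[/eqP -> _] /andP[/eqP -> _] ->.
Qed.

Lemma mem_Oj c : c \in oj.
Proof. by apply/mapP; exists (j, c); rewrite ?mem_filter ?eqxx ?mem_csam_order. Qed.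

Lemma perm_Oj : perm_eq oj (enum 'I_p).
Proof. by apply: uniq_perm; rewrite ?Oj_uniq ?enum_uniq // => c; rewrite mem_enum mem_Oj. Qed.

Lemma size_Oj : size oj = p.
Proof. by rewrite (perm_size perm_Oj) -cardT card_ord. Qed.

Lemma index_Oj c : index c oj = count (fun x : 'I_n * 'I_p => x.1 == j) (take (round c) O).
Proof.
rewrite /Oj -{1}(cat_take_drop (round c) O) filter_cat map_cat index_cat drop_round /=.
rewrite eqxx /= eqxx addn0 size_map size_filter.
case: ifP => // /mapP[[i c']]; rewrite mem_filter /= => /andP[/eqP -> in_take] c_eq.
by move: in_take; rewrite -c_eq (in_take _ (mem_csam_order _ ordO)) ltnn.
Qed.

Lemma index_Oj_leq c c' : (index c oj <= index c' oj) = (round c <= round c').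
Proof.
rewrite !index_Oj; apply/idP/idP; last exact: count_take_leq.
apply: contraLR; rewrite -!ltnNge => lt_cc'.
apply: leq_trans (count_take_leq _ _ lt_cc').
by rewrite (take_drop_cons (drop_round c')) -cats1 count_cat /= eqxx addn1.
Qed.

Hypothesis ordRj : is_linear_order (R j).

Lemma choice_untaken t c :
  t <= round c -> choice optim R (hist t) j c \in untaken (hist t) c.
Proof.
rewrite -chosen_from_hist_None => /eqP c_free.
have [d] := options_hist_nonempty t c; rewrite /options c_free => d_free.
rewrite /choice; case: (optim j); last first.
  by case: (pess_choice_min (R j) (options_hist_nonempty t) c_free).
have [b avail _] := exists_available_with (options_hist_nonempty t) c_free d_free.
have [b' head] := ohead_filter_exists (mem_linear_order b ordRj) avail.
rewrite /opt_choice head /=.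
by case/ohead_filter_Some: head => _ /availableP/(_ c); rewrite /options c_free.
Qed.

Lemma available_hist_succ t b : available (hist t.+1) j b -> available (hist t) j b.
Proof.
case: (ltnP t (size O)) => [lt_t | le_Ot]; last by rewrite !hist_end // ltnW.
have [[i c] [s dropE]] := drop_cons lt_t; rewrite (hist_succ dropE) /=.
case: (eqVneq i j) => [eq_ij | ne_ij]; last exact: available_rcons_other.
subst i; have round_c : round c = t by apply/eqP; rewrite (round_eq _ dropE).
have c_free : chosen_from (hist t) j c = None.
  by apply/eqP; rewrite chosen_from_hist_None round_c.
rewrite available_rcons_own //; first by case/andP.
by apply: choice_untaken; rewrite round_c.
Qed.

Lemma available_hist_mono t t' b :
  t <= t' -> available (hist t') j b -> available (hist t) j b.
Proof.
move=> le_tt'; rewrite -(subnK le_tt'); elim: (t' - t) => [//|k IH].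
by rewrite addSn => /available_hist_succ.
Qed.

Lemma csam_available : available (hist (size O)) j (csam O optim R j).
Proof.
apply/availableP => l; have := chosen_from_hist_None (size O) l.
rewrite leqNgt round_lt_size /options /csam ffunE /hist take_size.
by case: (chosen_from _ j l) => //= d _; rewrite inE.
Qed.

Lemma available_end_csam b : available (hist (size O)) j b -> b = csam O optim R j.
Proof.
move=> /availableP avail; apply/ffunP => l.
have := chosen_from_hist_None (size O) l; rewrite leqNgt round_lt_size.
have := avail l; have /availableP/(_ l) := csam_available; rewrite /options.
by case: (chosen_from _ j l) => // d; rewrite !inE => /eqP -> /eqP ->.
Qed.

Local Notation max_rank_at t := (max_rank (R j) (hist t) j).

Definition pess_slack t := \sum_(c <- oj | round c < t) (kji O j c - 1).

Lemma big_Oj (T : Type) (idx : T) (op : Monoid.com_law idx) (P : pred 'I_p) (F : 'I_p -> T) :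
  \big[op/idx]_(c <- oj | P c) F c = \big[op/idx]_(c | P c) F c.
Proof. by rewrite (perm_big _ perm_Oj) /index_enum -enumT. Qed.

Lemma pess_slack0 : pess_slack 0 = 0.
Proof. by rewrite /pess_slack big_pred0. Qed.

Lemma pess_slack_succ t x s : drop t O = x :: s ->
  pess_slack t.+1 = pess_slack t + \sum_(c <- oj | x == (j, c)) (kji O j c - 1).
Proof.
move=> dropE; rewrite /pess_slack (bigID (fun c => round c < t)) /=.
by congr (_ + _); apply: eq_bigl => c; rewrite -?(round_eq _ dropE) ltnS; case: ltngtP.
Qed.

Lemma max_rank0 : max_rank_at 0 <= n ^ p.
Proof. by apply/bigmax_leqP => b _; apply: Rank_le. Qed.

Lemma max_rank_succ t : max_rank_at t.+1 <= max_rank_at t.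
Proof.
by apply/bigmax_leqP => b /available_hist_succ avail; apply: leq_bigmax_cond.
Qed.

Lemma max_rank_pess_step t c s : ~~ optim j -> drop t O = (j, c) :: s ->
  max_rank_at t.+1 + (kji O j c - 1) <= max_rank_at t.
Proof.
move=> pess dropE; have round_c : round c = t by apply/eqP; rewrite (round_eq _ dropE).
have c_free : chosen_from (hist t) j c = None.
  by apply/eqP; rewrite chosen_from_hist_None round_c.
have [ds_free _] := pess_choice_min (R j) (options_hist_nonempty t) c_free.
have max_new :
    max_rank_at t.+1 <= worst_rank (R j) (hist t) j c (pess_choice (R j) (hist t) j c).
  apply/bigmax_leqP => b; rewrite (hist_succ dropE) /= /choice (negbTE pess).
  by rewrite available_rcons_own // => avail; apply: leq_bigmax_cond.
have := worst_rank_pess_choice ordRj (options_hist_nonempty t) c_free.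
have := kji_le_card_untaken (eq_leq (esym round_c)).
by move: max_new; set w := worst_rank _ _ _ _ _; set u := #|untaken _ _|; lia.
Qed.

Lemma pess_invariant t : ~~ optim j -> t <= size O -> max_rank_at t + pess_slack t <= n ^ p.
Proof.
move=> pess; elim: t => [_|t IH lt_t]; first by rewrite pess_slack0 addn0 max_rank0.
have [[i c] [s dropE]] := drop_cons lt_t; rewrite (pess_slack_succ dropE).
apply: leq_trans (IH (ltnW lt_t)); rewrite addnA addnAC leq_add2r.
case: (eqVneq i j) => [eq_ij | ne_ij].
  subst i; rewrite big_Oj (big_pred1 c) => [|c'] /=; last by rewrite xpair_eqE eqxx eq_sym.
  exact: max_rank_pess_step pess dropE.
rewrite big_pred0 ?addn0 ?max_rank_succ // => c'.
by rewrite xpair_eqE (negbTE ne_ij).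
Qed.

Lemma pess_rank_bound : ~~ optim j ->
  Rank (R j) (csam O optim R j) + \sum_(c <- oj) (kji O j c - 1) <= n ^ p.
Proof.
move=> pess; have := pess_invariant pess (leqnn (size O)).
have -> : pess_slack (size O) = \sum_(c <- oj) (kji O j c - 1).
  by apply: eq_bigl => c; rewrite round_lt_size.
by apply: leq_trans; rewrite leq_add2r; apply: leq_bigmax_cond; apply: csam_available.
Qed.

Lemma nobody_between_drop a l t x s :
  nobody_between O j a l -> round a < t -> t < round l -> drop t O = x :: s -> x.2 != l.
Proof.
move=> /allP nobody lt_at lt_tl dropE; apply: nobody.
have -> : x = nth x (drop (round a).+1 (take (round l) O)) (t - (round a).+1).
  by rewrite nth_drop subnKC // nth_take ?(nth_drop_cons dropE).
apply: mem_nth; rewrite size_drop size_takel ?(ltnW (round_lt_size l)) //.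
by rewrite ltn_sub2rE.
Qed.

Section Optimistic.
Variables (a : 'I_p) (b : bundle n p).
Hypothesis opt : optim j.
Hypothesis nobody : forall l, round a < round l -> nobody_between O j a l.
Hypothesis top : ohead [seq b' <- R j | available (hist (round a)) j b'] = Some b.

Lemma top_available_stays t : round a <= t -> available (hist t) j b.
Proof.
move=> le_at; rewrite -(subnK le_at); elim: (t - round a) => [|k IH].
  by case/ohead_filter_Some: top.
rewrite addSn; set t' := k + round a in IH *; have ge_a : round a <= t' by rewrite leq_addl.
case: (ltnP t' (size O)) => [lt_t | le_Ot]; last first.
  by rewrite hist_end ?(leqW le_Ot) // -(hist_end le_Ot).
have [[i c] [s dropE]] := drop_cons lt_t; rewrite (hist_succ dropE) /=.
have round_x l : (round l == t') = ((i, c) == (j, l)) := round_eq l dropE.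
case: (eqVneq i j) => [eq_ij | ne_ij].
  subst i; have c_free : chosen_from (hist t') j c = None.
    by apply/eqP; rewrite chosen_from_hist_None; apply/eq_leq/esym/eqP; rewrite round_x.
  have top_t : ohead [seq b' <- R j | available (hist t') j b'] = Some b.
    by apply: ohead_filter_sub top => // b' /(available_hist_mono ge_a).
  have b_free : b c \in untaken (hist t') c.
    by move/availableP/(_ c): IH; rewrite /options c_free.
  by rewrite /choice opt /opt_choice top_t /= available_rcons_own // IH eqxx.
apply: available_rcons_other_keep => //= l /eqP; rewrite chosen_from_hist_None => le_tl.
have ne_x l' : round l' != t' by rewrite round_x xpair_eqE (negbTE ne_ij).
have lt_at : round a < t' by rewrite ltn_neqAle ne_x.
have lt_tl : t' < round l by rewrite ltn_neqAle eq_sym ne_x.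
exact: nobody_between_drop (nobody (ltn_trans lt_at lt_tl)) lt_at lt_tl dropE.
Qed.

End Optimistic.

Lemma prod_kji_le_card_available a :
  \prod_(c <- drop (index a oj) oj) kji O j c <= #|available (hist (round a)) j|.
Proof.
rewrite card_available -(big_Oj _ xpredT).
rewrite -[in X in _ <= X](cat_take_drop (index a oj) oj) big_cat /=.
rewrite [X in _ <= X * _]big1_seq ?mul1n => [|c /andP[_ c_take]]; last first.
  have : round c < round a by rewrite ltnNge -index_Oj_leq -ltnNge index_ltn.
  rewrite ltnNge -chosen_from_hist_None /options.
  by case: (chosen_from _ j c) => // d _; apply: card1.
rewrite big_seq [X in _ <= X]big_seq; apply: leq_prod => c c_drop.
have le_ac : round a <= round c by rewrite -index_Oj_leq leq_index_drop ?Oj_uniq.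
have := kji_le_card_untaken le_ac; move: le_ac.
by rewrite -chosen_from_hist_None /options => /eqP ->.
Qed.

Lemma opt_rank_bound a : optim j -> (forall l, round a < round l -> nobody_between O j a l) ->
  Rank (R j) (csam O optim R j) + \prod_(c <- drop (index a oj) oj) kji O j c <= n ^ p + 1.
Proof.
move=> opt nobody; set A := available (hist (round a)) j.
have prod_le := prod_kji_le_card_available a.
have [b1 Ab1] : exists b1, A b1.
  apply/card_gt0P; apply: leq_trans prod_le.
  by rewrite prodn_gt0 // => c; apply: kji_gt0.
have [b top] := ohead_filter_exists (mem_linear_order b1 ordRj) Ab1.
have <- : b = csam O optim R j.
  by apply/available_end_csam/(top_available_stays opt nobody top)/ltnW/round_lt_size.
have rank_b : Rank (R j) b <= #|predC A|.+1.
  by apply: index_ohead_filter_le top; rewrite (perm_uniq ordRj) enum_uniq.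
have := cardC A; rewrite card_bundle.
by move: prod_le rank_b; set k := #|predC A|; set m := #|A|; lia.
Qed.

Lemma Kcond_Kj0 : Kj0 O j < p -> Kcond O j (Kj0 O j).
Proof.
move=> lt_K; have has_K : has (Kcond O j) (iota 0 p) by rewrite has_find size_iota.
by have := nth_find 0 has_K; rewrite nth_iota.
Qed.

End Run.

Unset Implicit Arguments.

Theorem proposition1 (n p : nat) (O : seq ('I_n * 'I_p)) (HO : is_csam_order O)
    (optim : 'I_n -> bool) (R : 'I_n -> seq (bundle n p))
    (HR : forall j, is_linear_order (R j)) (j : 'I_n) :
  (optim j ->
     Rank (R j) (csam O optim R j) + \prod_(c <- drop (Kj0 O j) (Oj O j)) kji O j c
       <= n ^ p + 1) /\
  (~~ optim j ->
     Rank (R j) (csam O optim R j) + \sum_(c <- Oj O j) (kji O j c - 1) <= n ^ p).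
Proof.
split=> [opt | pess]; last exact: pess_rank_bound.
case: (ltnP (Kj0 O j) p) => [lt_K | le_pK]; last first.
  by rewrite drop_oversize ?size_Oj // big_nil !addn1 ltnS Rank_le.
set a := nth (Ordinal lt_K) (Oj O j) (Kj0 O j).
have index_a : index a (Oj O j) = Kj0 O j by rewrite index_uniq ?size_Oj ?Oj_uniq.
rewrite -index_a; apply: opt_rank_bound => // l lt_al.
have /forallP/(_ a)/forallP/(_ l)/implyP := Kcond_Kj0 lt_K; apply.
by rewrite index_a eqxx -index_a ltnNge index_Oj_leq // -ltnNge.
Qed.
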